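(* Let $1\le k\le n-1$. There is $\varepsilon>0$ (depending on $k,n$) such that the following holds whenever $\alpha_1,\dots,\alpha_{k-1}>0$ satisfy $\alpha_{i+1}<\varepsilon\,\alpha_i$ for all $i$. Define $w:V_{k,n}\to\mathbb{R}$ by $w(i_1,\dots,i_k)=\sum_{1\le a<b\le k}\alpha_{b-a}\,i_a i_b$. Let $\{I,J\}$ and $\{X,Y\}$ be two different pairs of elements of $V_{k,n}$ such that $I$ and $J$ are noncrossing and $\chi_I+\chi_J=\chi_X+\chi_Y$. Then $X$ and $Y$ are crossing (i.e. not noncrossing), and $w(I)+w(J)<w(X)+w(Y)$.
   Context: $V_{k,n}$ denotes the set of integer vectors $I=(i_1,\dots,i_k)$ with $1\le i_1<\dots<i_k\le n$. Two arcs $(p<p')$ and $(q<q')$ cross if $p<q<p'<q'$ or $q<p<q'<p'$. $I,J\in V_{k,n}$ are noncrossing if for all indices $1\le a<b\le k$ such that $i_\ell=j_\ell$ for all $a<\ell<b$, the arcs $(i_a<i_b)$ and $(j_a<j_b)$ do not cross. Let $P_{k,n}=\{(a,b):a\in[k],b\in[n-k]\}$ and $\chi_I\in\{0,1\}^{P_{k,n}}$ with $(\chi_I)_{a,b}=1$ iff $i_a\le a+b-1$. *)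

From HB Require Import structures.
From mathcomp Require Import all_boot all_order all_algebra.
Set Implicit Arguments. Unset Strict Implicit. Unset Printing Implicit Defensive.
Import Order.TTheory GRing.Theory Num.Theory.

(* Elements of V_{k,n} are represented as sequences of naturals;
   entry i_a (paper, 1-based a) is [nth 0 I (a-1)] (0-based). *)
Definition inV (k n : nat) (I : seq nat) : bool :=
  [&& size I == k, sorted ltn I & all (fun x => 0 < x <= n) I].

Definition arcs_cross (p p' q q' : nat) : Prop :=
  (p < q < p' /\ p' < q') \/ (q < p < q' /\ q' < p').

(* noncrossing, with 0-based indices a < b < k *)
Definition noncrossing (k : nat) (I J : seq nat) : Prop :=
  forall a b : nat, a < b -> b < k ->
    (forall l : nat, a < l -> l < b -> nth 0 I l = nth 0 J l) ->
    ~ arcs_cross (nth 0 I a) (nth 0 I b) (nth 0 J a) (nth 0 J b).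

(* chi_I at the point (a+1, b+1) of P_{k,n}, with a : 'I_k, b : 'I_(n-k):
   equals 1 iff i_{a+1} <= (a+1)+(b+1)-1 = a+b+1. *)
Definition chi (k n : nat) (I : seq nat) (a : 'I_k) (b : 'I_(n - k)) : nat :=
  nat_of_bool (nth 0 I a <= a + b + 1).

Definition wt (R : numDomainType) (alpha : nat -> R) (k : nat) (I : seq nat) : R :=
  (\sum_(a < k) \sum_(b < k | (a < b)%N)
     alpha (b - a)%N * (nth 0 I a)%:R * (nth 0 I b)%:R)%R.
Arguments chi : clear implicits.

From HB Require Import structures.
From mathcomp Require Import all_boot all_order all_algebra.
From mathcomp Require Import zify ring lra.
Import Order.TTheory GRing.Theory Num.Theory.

(* Row by row, chi_I + chi_J = chi_X + chi_Y forces {x_a, y_a} = {i_a, j_a}.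
   As {X, Y} <> {I, J}, X switches from following I to following J between two
   rows a < b where I and J differ; choose such a pair with b - a = d minimal,
   so that I and J agree strictly between a and b.  Noncrossing of I and J at
   (a, b) then forces nested arcs, so X and Y cross there and
   i_a i_b + j_a j_b < x_a x_b + y_a y_b.  In w(X) + w(Y) - w(I) - w(J), pairs of
   rows at distance at most d contribute nonnegatively, the pair (a, b) at least
   alpha_d, and every pair at larger distance at least -eps alpha_d 2n^2; with
   eps = 1 / (2 k^2 n^2 + 1) the gain wins. *)

Set Implicit Arguments.
Unset Strict Implicit.
Unset Printing Implicit Defensive.

Local Notation "s `@ a" := (nth 0 s a) (at level 10).

Lemma inV_size k n I : inV k n I -> size I = k.
Proof. by case/and3P => /eqP. Qed.

Lemma inV_nth_lt k n I a b : inV k n I -> a < b -> b < k -> I`@a < I`@b.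
Proof.
case/and3P=> /eqP hs hsort _ hab hb.
by apply: (sorted_ltn_nth ltn_trans) => //; rewrite inE hs //; lia.
Qed.

Lemma inV_nth_range k n I a : inV k n I -> a < k -> 0 < I`@a <= n.
Proof. by case/and3P => /eqP hs _ /allP hall ha; apply: hall; rewrite mem_nth ?hs. Qed.

Lemma inV_nth_bounds k n I a : inV k n I -> a < k -> a < I`@a <= n - k + a.+1.
Proof.
move=> hV hak.
have hmono := fun a b => @inV_nth_lt k n I a b hV.
have hall c : c < k -> 0 < I`@c <= n by exact: inV_nth_range.
have lo : forall c, c < k -> c < I`@c.
  elim=> [|c IH] hc; first by have := hall 0 hc; lia.
  by have := IH (ltnW hc); have := hmono c c.+1 (ltnSn c) hc; lia.
have hi : forall d, a + d < k -> I`@a + d <= I`@(a + d).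
  elim=> [|d IH] hd; first by rewrite !addn0.
  by have := IH ltac:(lia); have := hmono (a + d) (a + d.+1) ltac:(lia) hd; lia.
have := hi (k.-1 - a) ltac:(lia); have := hall (a + (k.-1 - a)) ltac:(lia).
by have := lo a hak; lia.
Qed.

(* Comparing the smallest threshold at which the two counts differ recovers first the minimum, then the maximum of the pair. *)
Lemma threshold_counts_pair_eq (a m i j x y : nat) :
  a < i <= a.+1 + m -> a < j <= a.+1 + m -> a < x <= a.+1 + m -> a < y <= a.+1 + m ->
  (forall b, b < m -> (i <= a + b + 1) + (j <= a + b + 1)
                     = (x <= a + b + 1) + (y <= a + b + 1) :> nat) ->
  (x = i /\ y = j) \/ (x = j /\ y = i).
Proof.
move=> hi hj hx hy E.
have hmin : minn x y = minn i j.
  case: (ltngtP (minn x y) (minn i j)) => // h.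
  - by have := E (minn x y - a.+1) ltac:(lia); do 4 case: leqP => /=; lia.
  - by have := E (minn i j - a.+1) ltac:(lia); do 4 case: leqP => /=; lia.
have hmax : maxn x y = maxn i j.
  case: (ltngtP (maxn x y) (maxn i j)) => // h.
  - by have := E (maxn x y - a.+1) ltac:(lia); do 4 case: leqP => /=; lia.
  - by have := E (maxn i j - a.+1) ltac:(lia); do 4 case: leqP => /=; lia.
lia.
Qed.

Lemma arcs_crossC p p' q q' : arcs_cross p p' q q' <-> arcs_cross q q' p p'.
Proof. by rewrite /arcs_cross; tauto. Qed.

(* Two noncrossing arcs whose swapped endpoints still form arcs must be nested, and swapping nested arcs creates a crossing. *)
Lemma swap_noncrossing_arcs p p' q q' :
  p < p' -> q < q' -> p < q' -> q < p' -> p != q -> p' != q' ->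
  ~ arcs_cross p p' q q' ->
  arcs_cross p q' q p' /\ p * p' + q * q' < p * q' + q * p'.
Proof.
move=> ? ? ? ? /eqP ? /eqP ?; rewrite /arcs_cross => nc.
have [[? ?]|[? ?]] : (p < q /\ q' < p') \/ (q < p /\ p' < q') by lia.
- by split; [lia | nia].
- by split; [lia | nia].
Qed.

Definition row_match (I J X Y : seq nat) l :=
  (X`@l = I`@l /\ Y`@l = J`@l) \/ (X`@l = J`@l /\ Y`@l = I`@l).

Definition flip (I J X : seq nat) (a b : nat) :=
  [&& a < b, I`@a != J`@a, I`@b != J`@b & (X`@a == I`@a) != (X`@b == I`@b)].

Definition pair_prod (I J : seq nat) a b := I`@a * I`@b + J`@a * J`@b.

Lemma flip_split I J X a l b :
  flip I J X a b -> a < l < b -> I`@l != J`@l -> flip I J X a l || flip I J X l b.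
Proof.
rewrite /flip => /and4P [_ -> -> hs] /andP [-> ->] -> /=.
by move: hs; case: (X`@l == I`@l); case: (X`@a == I`@a); case: (X`@b == I`@b).
Qed.

Lemma min_flip_exists I J X k :
  (exists a b, b < k /\ flip I J X a b) ->
  exists a b, [/\ b < k, flip I J X a b &
    forall a' b', b' < k -> flip I J X a' b' -> b - a <= b' - a'].
Proof.
pose P d := [exists a : 'I_k, exists b : 'I_k, (a + d == b) && flip I J X a b].
have flipP a b : b < k -> flip I J X a b -> P (b - a).
  move=> hb hf; have hab : a < b by case/andP: hf.
  apply/existsP; exists (Ordinal (ltn_trans hab hb)); apply/existsP; exists (Ordinal hb).
  by rewrite /= hf andbT; apply/eqP; lia.
move=> [a [b [hb hf]]]; have /ex_minnP [d] : exists d, P d by exists (b - a); exact: flipP.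
move=> /existsP [a' /existsP [b' /andP [/eqP e hf']]] dmin.
exists a', b'; split=> // a'' b'' hb'' hf''.
by have := dmin _ (flipP _ _ hb'' hf''); lia.
Qed.

Lemma min_flip_gap I J X k a b :
  b < k -> flip I J X a b ->
  (forall a' b', b' < k -> flip I J X a' b' -> b - a <= b' - a') ->
  forall l, a < l -> l < b -> I`@l = J`@l.
Proof.
move=> hb hf hmin l hal hlb; apply/eqP/negPn/negP => hl.
case/orP: (flip_split hf (introT andP (conj hal hlb)) hl) => hf'.
- by have := hmin a l ltac:(lia) hf'; lia.
- by have := hmin l b hb hf'; lia.
Qed.

Lemma pair_prod_le k n I J a b : inV k n I -> inV k n J -> a < k -> b < k ->
  pair_prod I J a b <= 2 * n * n.
Proof.
move=> hI hJ ha hb; rewrite /pair_prod.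
have le_n s c : inV k n s -> c < k -> s`@c <= n.
  by move=> hs hc; case/andP: (inV_nth_range hs hc).
have := leq_mul (le_n I a hI ha) (le_n I b hI hb).
have := leq_mul (le_n J a hJ ha) (le_n J b hJ hb).
lia.
Qed.

Section FlipPairs.

Variables (k n : nat) (I J X Y : seq nat).
Hypotheses (hI : inV k n I) (hJ : inV k n J) (hX : inV k n X) (hY : inV k n Y).

Lemma chi_row_match :
  (forall (a : 'I_k) (b : 'I_(n - k)),
      chi k n I a b + chi k n J a b = chi k n X a b + chi k n Y a b) ->
  forall l, l < k -> row_match I J X Y l.
Proof.
move=> hchi l hl.
have bnd s : inV k n s -> l < s`@l <= l.+1 + (n - k).
  by move=> hs; have := inV_nth_bounds hs hl; lia.
apply: (@threshold_counts_pair_eq l (n - k)); try exact: bnd.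
by move=> b hb; exact: (hchi (Ordinal hl) (Ordinal hb)).
Qed.

Hypothesis rows : forall l, l < k -> row_match I J X Y l.

Lemma flip_exists :
  ~ ((I = X /\ J = Y) \/ (I = Y /\ J = X)) -> exists a b, b < k /\ flip I J X a b.
Proof.
have eq_seq s t : inV k n s -> inV k n t -> (forall l, l < k -> s`@l = t`@l) -> s = t.
  move=> hs ht E; apply: (@eq_from_nth _ 0) => [|l]; rewrite !(inV_size hs) ?(inV_size ht) //.
  exact: E.
move=> hne.
case: (boolP [exists a : 'I_k, (I`@a != J`@a) && (X`@a != I`@a)]) =>
    [/existsP [a /andP [Pa sa]] | /existsPn H1]; last first.
  exfalso; apply: hne; left.
  have E l : l < k -> X`@l = I`@l /\ Y`@l = J`@l.
    by move=> hl; have := H1 (Ordinal hl); case: (rows hl); case: eqP; case: eqP => //=; lia.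
  by split; apply: eq_seq => // l hl; have := E l hl; lia.
case: (boolP [exists b : 'I_k, (I`@b != J`@b) && (X`@b == I`@b)]) =>
    [/existsP [b /andP [Pb sb]] | /existsPn H2]; last first.
  exfalso; apply: hne; right.
  have E l : l < k -> X`@l = J`@l /\ Y`@l = I`@l.
    by move=> hl; have := H2 (Ordinal hl); case: (rows hl); case: eqP; case: eqP => //=; lia.
  by split; apply: eq_seq => // l hl; have := E l hl; lia.
case: (ltngtP a b) => h.
- by exists a, b; split => //; rewrite /flip h Pa Pb sb (negbTE sa).
- by exists b, a; split => //; rewrite /flip h Pa Pb sb (negbTE sa).
- by exfalso; rewrite (val_inj h) sb in sa.
Qed.

Lemma pair_prod_eq_or_flip a b : a < b -> b < k ->
  pair_prod X Y a b = pair_prod I J a b \/ flip I J X a b.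
Proof.
move=> hab hb; rewrite /pair_prod /flip hab.
case: (rows (ltn_trans hab hb)) => -[-> ->]; case: (rows hb) => -[-> ->];
  rewrite ?eqxx /=; try by left; lia.
- by case: eqP => [->|]; case: eqP => [->|] //=; [left..|right]; lia.
- by case: eqP => [->|]; case: eqP => [->|] //=; [left..|right]; lia.
Qed.

Hypothesis nIJ : noncrossing k I J.

Lemma flip_gap_swap a b : b < k -> flip I J X a b ->
  (forall l, a < l -> l < b -> I`@l = J`@l) ->
  pair_prod I J a b < pair_prod X Y a b /\ ~ noncrossing k X Y.
Proof.
move=> hb /and4P [hab Pa Pb hs] gap.
have lt_ab s : inV k n s -> s`@a < s`@b by move=> hV; exact: inV_nth_lt hV hab hb.
have nc := nIJ hab hb gap.
have gapXY l : a < l -> l < b -> X`@l = Y`@l.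
  by move=> h1 h2; have := gap l h1 h2; case: (rows (ltn_trans h2 hb)); lia.
have crossXY : arcs_cross (X`@a) (X`@b) (Y`@a) (Y`@b) -> ~ noncrossing k X Y.
  by move=> hc nXY; exact: nXY a b hab hb gapXY hc.
have swap := swap_noncrossing_arcs (lt_ab I hI) (lt_ab J hJ) _ _ Pa Pb nc.
have hXa := lt_ab X hX; have hYa := lt_ab Y hY.
rewrite /pair_prod.
case: (rows (ltn_trans hab hb)) => -[ea fa]; case: (rows hb) => -[eb fb];
  rewrite ea fa eb fb in hs hXa hYa crossXY *.
- by rewrite !eqxx in hs.
- have [hc hp] := swap hXa hYa.
  by split; [lia | exact: crossXY].
- have [hc hp] := swap hYa hXa.
  by split; [lia | apply: crossXY; rewrite arcs_crossC].
- by move: hs; rewrite ![J`@_ == _]eq_sym (negbTE Pa) (negbTE Pb).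
Qed.

Lemma pair_prod_le_min_flip a0 b0 : b0 < k -> flip I J X a0 b0 ->
  (forall a' b', b' < k -> flip I J X a' b' -> b0 - a0 <= b' - a') ->
  forall a b, a < b < k -> b - a <= b0 - a0 -> pair_prod I J a b <= pair_prod X Y a b.
Proof.
move=> hb0 hf0 hmin a b /andP [hab hbk] hd.
case: (pair_prod_eq_or_flip hab hbk) => [-> // | hf].
have hmin' a' b' : b' < k -> flip I J X a' b' -> b - a <= b' - a'.
  by move=> hb' hf'; have := hmin a' b' hb' hf'; have := hmin a b hbk hf; lia.
by apply: ltnW; case: (flip_gap_swap hbk hf (min_flip_gap hbk hf hmin')).
Qed.

End FlipPairs.

Open Scope ring_scope.

Lemma ratio_chain_le (R : realFieldType) (alpha : nat -> R) (k : nat) (eps : R) :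
  eps <= 1 ->
  (forall i, (1 <= i)%N -> (i <= k - 1)%N -> 0 < alpha i) ->
  (forall i, (1 <= i)%N -> (i < k - 1)%N -> alpha i.+1 < eps * alpha i) ->
  forall d d', (1 <= d)%N -> (d < d')%N -> (d' <= k - 1)%N -> alpha d' <= eps * alpha d.
Proof.
move=> e1 hpos hdec d; elim=> [|d' IH] // h1 h2 h3.
have [lt_dd'|gt_dd'|<-] := ltngtP d d'; [|lia|by apply/ltW/hdec; lia].
have := IH h1 lt_dd' ltac:(lia); have := hdec d' ltac:(lia) ltac:(lia).
have := hpos d' ltac:(lia) ltac:(lia) => ad' ? ?.
have : eps * alpha d' <= alpha d' by rewrite ler_piMl // ltW.
lra.
Qed.

Lemma sum_pairs_lower_bound (R : realFieldType) (k : nat) (F : nat -> nat -> R)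
    (a0 b0 : nat) (c M : R) :
  (a0 < b0)%N -> (b0 < k)%N -> 0 <= c ->
  (forall a b : nat, (a < b)%N -> (b < k)%N -> - c <= F a b) -> M <= F a0 b0 ->
  M - (k * k)%:R * c <= \sum_(a < k) \sum_(b < k | (a < b)%N) F a b.
Proof.
move=> hab hbk hc hF hM.
pose S G := \sum_(a < k) \sum_(b < k | (a < b)%N) (G a b : R).
have shift : S F = S (fun a b => F a b + c) - S (fun _ _ => c).
  rewrite /S -sumrB; apply: eq_bigr => a _; rewrite -sumrB.
  by apply: eq_bigr => b _; rewrite addrK.
have count : S (fun _ _ => c) <= (k * k)%:R * c.
  apply: (@le_trans _ _ (\sum_(a < k) \sum_(b < k) c)).
    apply: ler_sum => a _; rewrite big_mkcond /=; apply: ler_sum => b _.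
    by case: ifP.
  by rewrite !sumr_const !card_ord -mulrnA mulr_natl.
have single : F a0 b0 + c <= S (fun a b => F a b + c).
  have ha0 : (a0 < k)%N by lia.
  rewrite /S (bigD1 (Ordinal ha0)) //= (bigD1 (Ordinal hbk)) //= -addrA lerDl.
  apply: addr_ge0.
    by apply: sumr_ge0 => b /andP [h _]; have := hF _ _ h (ltn_ord _); lra.
  apply: sumr_ge0 => a _; apply: sumr_ge0 => b h.
  by have := hF _ _ h (ltn_ord _); lra.
rewrite -/(S F) shift; lra.
Qed.

(* The weights at the gap [d] dominate every larger gap by a factor [eps], and the [k * k] error terms of size at most [eps * alpha d * C] cannot compensate the gain [alpha d]. *)
Lemma dominant_pair_sum_gt0 (R : realFieldType) (k d : nat) (eps C : R)
    (alpha : nat -> R) (D : nat -> nat -> R) (a0 b0 : nat) :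
  0 < eps -> eps <= 1 -> 0 <= C -> eps * ((k * k)%:R * C) < 1 ->
  (forall i, (1 <= i)%N -> (i <= k - 1)%N -> 0 < alpha i) ->
  (forall i, (1 <= i)%N -> (i < k - 1)%N -> alpha i.+1 < eps * alpha i) ->
  (forall a b, (a < b < k)%N -> - C <= D a b) ->
  (forall a b, (a < b < k)%N -> (b - a <= d)%N -> 0 <= D a b) ->
  (a0 < b0 < k)%N -> (b0 - a0)%N = d -> 1 <= D a0 b0 ->
  0 < \sum_(a < k) \sum_(b < k | (a < b)%N) alpha (b - a)%N * D a b.
Proof.
move=> e0 e1 C0 hsmall hpos hdec hC hnear /andP [hab0 hb0] hd hD0.
have ad : 0 < alpha d by apply: hpos; lia.
pose c := eps * alpha d * C.
have c0 : 0 <= c by rewrite !mulr_ge0 // ltW.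
have hF a b : (a < b)%N -> (b < k)%N -> - c <= alpha (b - a)%N * D a b.
  move=> hab hbk; have ap : 0 < alpha (b - a)%N by apply: hpos; lia.
  have [near|far] := leqP (b - a) d.
    have : 0 <= alpha (b - a)%N * D a b.
      by apply: mulr_ge0; [exact: ltW | apply: hnear; rewrite ?hab].
    lra.
  have ch : alpha (b - a)%N <= eps * alpha d.
    by apply: (ratio_chain_le e1 hpos hdec) => //; lia.
  have := ler_wpM2l (ltW ap) (hC a b ltac:(lia)).
  have := ler_wpM2r C0 ch.
  rewrite /c; lra.
have hM : alpha d <= alpha (b0 - a0)%N * D a0 b0.
  by rewrite hd -{1}(mulr1 (alpha d)) ler_wpM2l // ltW.
have := sum_pairs_lower_bound hab0 hb0 c0 hF hM.
have : 0 < alpha d * (1 - eps * ((k * k)%:R * C)) by rewrite mulr_gt0 ?subr_gt0.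
rewrite /c; lra.
Qed.

Lemma wt_sub_pair_prod (R : numDomainType) (alpha : nat -> R) k (I J X Y : seq nat) :
  wt alpha k X + wt alpha k Y - (wt alpha k I + wt alpha k J) =
  \sum_(a < k) \sum_(b < k | (a < b)%N)
     alpha (b - a)%N * ((pair_prod X Y a b)%:R - (pair_prod I J a b)%:R).
Proof.
rewrite /wt -!big_split /= -sumrB; apply: eq_bigr => a _.
rewrite -!big_split /= -sumrB; apply: eq_bigr => b _.
by rewrite /pair_prod !natrD !natrM; ring.
Qed.

Close Scope ring_scope.

Theorem lemma4p5 (R : realFieldType) (k n : nat) (hk1 : 1 <= k) (hkn : k < n) :
  exists eps : R, (0 < eps)%R /\
  forall alpha : nat -> R,
    (forall i, 1 <= i -> i <= k - 1 -> (0 < alpha i)%R) ->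
    (forall i, 1 <= i -> i < k - 1 -> (alpha i.+1 < eps * alpha i)%R) ->
    forall I J X Y : seq nat,
      inV k n I -> inV k n J -> inV k n X -> inV k n Y ->
      ~ ((I = X /\ J = Y) \/ (I = Y /\ J = X)) ->
      noncrossing k I J ->
      (forall (a : 'I_k) (b : 'I_(n - k)),
          chi k n I a b + chi k n J a b = chi k n X a b + chi k n Y a b) ->
      ~ noncrossing k X Y /\
      (wt alpha k I + wt alpha k J < wt alpha k X + wt alpha k Y)%R.
Proof.
pose C := (2 * n * n)%N; pose K := (k * k * C).+1.
have K0 : (0 < K%:R :> R)%R by rewrite ltr0n.
exists (K%:R^-1)%R; split; first by rewrite invr_gt0.
move=> alpha hpos hdec I J X Y hI hJ hX hY hne nIJ hchi.
have rows := chi_row_match hI hJ hX hY hchi.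
have [a0 [b0 [hb0 hf0 hmin]]] := min_flip_exists (flip_exists hI hJ hX hY rows hne).
have [gain cross] := flip_gap_swap hI hJ hX hY rows nIJ hb0 hf0 (min_flip_gap hb0 hf0 hmin).
split=> //; rewrite -subr_gt0 wt_sub_pair_prod.
have hab0 : (a0 < b0)%N by case/andP: hf0.
apply: (@dominant_pair_sum_gt0 R k (b0 - a0) K%:R^-1 C%:R alpha
  (fun a b => (pair_prod X Y a b)%:R - (pair_prod I J a b)%:R)%R a0 b0) => //.
- by rewrite invr_gt0.
- by rewrite invf_le1 // ler1n.
- have -> : ((k * k)%:R * C%:R = K%:R - 1 :> R)%R by rewrite -natrM /K -natr1 addrK.
  by rewrite mulrBr mulVf ?pnatr_eq0 // mulr1 gtrDl oppr_lt0 invr_gt0.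
- move=> a b /andP [hab hbk]; have := pair_prod_le hI hJ (ltn_trans hab hbk) hbk.
  by rewrite -(ler_nat R) -sub0r => hle; apply: lerB.
- move=> a b /andP [hab hbk] hd.
  rewrite subr_ge0 ler_nat.
  by apply: (pair_prod_le_min_flip hI hJ hX hY rows nIJ hb0 hf0 hmin); rewrite ?hab.
- by rewrite hab0.
- by rewrite lerBrDr addrC natr1 ler_nat.
Qed.
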